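(* (1) Let $(Y^*,Y,X)$ be random variables with $Y^*,Y\in\{0,1\}$, $X=(\tilde X,Z)\in\mathcal X$, $\tilde X\in\tilde{\mathcal X}$, $Z$ taking values in a finite set $\mathcal Z$. Let $p(x)=\Pr(Y=1\mid X=x)$, $p^*(x)=\Pr(Y^*=1\mid X=x)$, $\underline p_z(\tilde x)=\inf_{z\in\mathcal Z}p(\tilde x,z)$, $\bar p_z(\tilde x)=\sup_{z\in\mathcal Z}p(\tilde x,z)$. Assume: for all $x=(\tilde x,z)$ and $y\in\{0,1\}$, $\Pr(Y=1-y\mid Y^*=y,X=x)=\Pr(Y=1-y\mid Y^*=y,\tilde X=\tilde x)$; for all $\tilde x$, $\Pr(Y=0\mid Y^*=1,\tilde x)+\Pr(Y=1\mid Y^*=0,\tilde x)\le1$; for all $\tilde x$, $\bar p_z(\tilde x)>0$ and $\underline p_z(\tilde x)<1$; and for all $\tilde x$, $\Pr(Y=1\mid Y^*=0,\tilde x)\le\Pr(Y=0\mid Y^*=1,\tilde x)$. Then for every $x=(\tilde x,z)\in\mathcal X$, $$p^*(x)\in\left[\frac{p(x)-\min\{\underline p_z(\tilde x),1-\bar p_z(\tilde x)\}}{1-\min\{\underline p_z(\tilde x),1-\bar p_z(\tilde x)\}},\ \frac{p(x)}{\bar p_z(\tilde x)}\right].$$ (2) Let $(Y^*,Y,X,W)$ be random variables with $Y^*,Y\in\{0,1\}$, $X\in\mathcal X$, $W$ taking values in a finite set of reals $\mathcal W$. Let $p^*(x)=\Pr(Y^*=1\mid X=x)$, $p_W(x,w)=\Pr(Y=1\mid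 X=x,W=w)$, $\underline p_w(x,w)=\inf_{\tilde w\le w}p_W(x,\tilde w)$, $\bar p_w(x,w)=\sup_{\tilde w\le w}p_W(x,\tilde w)$ (over $\tilde w\in\mathcal W$). Assume: $\Pr(Y^*=1\mid x,w)=p^*(x)$ for all $x,w$; for all $x$, $y\in\{0,1\}$ and $w_1>w_2$ in $\mathcal W$, $\Pr(Y=1-y\mid Y^*=y,x,w_1)\le\Pr(Y=1-y\mid Y^*=y,x,w_2)$; for all $x,w$, $\Pr(Y=1\mid Y^*=0,x,w)+\Pr(Y=0\mid Y^*=1,x,w)\le1$ and $0<p_W(x,w)<1$; and for all $(x,w)$, $\Pr(Y=1\mid Y^*=0,x,w)\le\Pr(Y=0\mid Y^*=1,x,w)$. Then for every $x\in\mathcal X$, $$p^*(x)\in\left[\sup_{w\in\mathcal W}\left\{\frac{p_W(x,w)-\min\{\underline p_w(x,w),1-\bar p_w(x,w)\}}{1-\min\{\underline p_w(x,w),1-\bar p_w(x,w)\}}\right\},\ \inf_{w\in\mathcal W}\left\{\frac{p_W(x,w)}{\bar p_w(x,w)}\right\}\right].$$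
   Context: $Y^*$ is the true (unobserved) binary outcome and $Y$ the observed, possibly misreported outcome; conditioning on $\tilde x$ (resp. $x,w$) means conditioning on $\tilde X=\tilde x$ (resp. $X=x,W=w$). *)

From HB Require Import structures.
From mathcomp Require Import all_boot all_order all_algebra.
Set Implicit Arguments. Unset Strict Implicit. Unset Printing Implicit Defensive.
Import Order.TTheory GRing.Theory Num.Theory.
Local Open Scope ring_scope.

(* A conditional law of (Y*, Y) given a conditioning value c is described by
   pst c  = Pr(Y* = 1 | c)
   a y c  = Pr(Y = 1 - y | Y* = y, c)     (misreporting probabilities)
   so that, by the law of total probability,
   Pr(Y = 1 | c) = Pr(Y*=0|c) Pr(Y=1|Y*=0,c) + Pr(Y*=1|c) Pr(Y=1|Y*=1,c). *)
Definition probY1 (R : realFieldType) (C : Type)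
  (pst : C -> R) (a : bool -> C -> R) (c : C) : R :=
  (1 - pst c) * a false c + pst c * (1 - a true c).

(* Pr(Y = 1 - y | Y* = y, Xt = xt) = sum_z Pr(Z=z | Y*=y, Xt=xt) Pr(Y=1-y | Y*=y, Xt=xt, Z=z),
   where piZ xt y z = Pr(Z = z | Y* = y, Xt = xt). *)
Definition abarXt (R : realFieldType) (Xt : Type) (Z : finType)
  (piZ : Xt -> bool -> Z -> R) (a : bool -> Xt * Z -> R) (y : bool) (xt : Xt) : R :=
  \sum_(z : Z) piZ xt y z * a y (xt, z).

(* inf / sup over the finite nonempty set Z (z0 only seeds the iteration). *)
Definition plowZ (R : realFieldType) (Xt : Type) (Z : finType)
  (p : Xt * Z -> R) (xt : Xt) (z0 : Z) : R :=
  \big[Num.min/p (xt, z0)]_(z : Z) p (xt, z).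
Definition pbarZ (R : realFieldType) (Xt : Type) (Z : finType)
  (p : Xt * Z -> R) (xt : Xt) (z0 : Z) : R :=
  \big[Num.max/p (xt, z0)]_(z : Z) p (xt, z).

(* p*(x) = Pr(Y*=1 | X=x) = sum_w Pr(W=w|X=x) Pr(Y*=1|X=x,W=w),  omega x w = Pr(W=w|X=x). *)
Definition pstarXW (R : realFieldType) (X : Type) (W : finType)
  (omega : X -> W -> R) (ps : X -> W -> R) (x : X) : R :=
  \sum_(w : W) omega x w * ps x w.

(* inf / sup of pW x wt over wt in W with wv wt <= wv w (nonempty: contains w). *)
Definition plowW (R : realFieldType) (X : Type) (W : finType) (wv : W -> R)
  (pW : X -> W -> R) (x : X) (w : W) : R :=
  \big[Num.min/pW x w]_(wt : W | wv wt <= wv w) pW x wt.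
Definition pbarW (R : realFieldType) (X : Type) (W : finType) (wv : W -> R)
  (pW : X -> W -> R) (x : X) (w : W) : R :=
  \big[Num.max/pW x w]_(wt : W | wv wt <= wv w) pW x wt.

(* max / min over the finite nonempty set W (w0 only seeds the iteration). *)
Definition supW (R : realFieldType) (W : finType) (w0 : W) (F : W -> R) : R :=
  \big[Num.max/F w0]_(w : W) F w.
Definition infW (R : realFieldType) (W : finType) (w0 : W) (F : W -> R) : R :=
  \big[Num.min/F w0]_(w : W) F w.

From HB Require Import structures.
From mathcomp Require Import all_boot all_order all_algebra.
From mathcomp Require Import lra.
Set Implicit Arguments. Unset Strict Implicit. Unset Printing Implicit Defensive.
Import Order.TTheory GRing.Theory Num.Theory.
Local Open Scope ring_scope.

(* Given the covariates, Pr(Y = 1) = (1 - p* ) a0 + p* (1 - a1), where a0 and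
   a1 are the two misreporting rates; since a0 + a1 <= 1 this mixture lies in
   [a0, 1 - a1].  If the rates do not vary with z (part 1), or can only
   decrease in w (part 2), then every observed probability in the relevant
   range lies in [a0, 1 - a1], so a0 <= inf p and a1 <= 1 - sup p; since
   a0 <= a1, both entries of the min bound a0 from above.  Solving the
   mixture identity for p* with these bounds on a0 and a1 gives the interval. *)

Definition mixY1 (R : realFieldType) (P a0 a1 : R) : R :=
  (1 - P) * a0 + P * (1 - a1).

Lemma probY1E (R : realFieldType) (C : Type) (pst : C -> R) (a : bool -> C -> R) c :
  probY1 pst a c = mixY1 (pst c) (a false c) (a true c).
Proof. by []. Qed.

Section Mixture.
Variable R : realFieldType.
Implicit Types (P m plow pbar : R).

Lemma mixY1_between P a0 a1 b0 b1 :
  0 <= P <= 1 -> b0 + b1 <= 1 -> a0 <= b0 -> a1 <= b1 ->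
  a0 <= mixY1 P b0 b1 <= 1 - a1.
Proof.
move=> /andP[P_ge0 P_le1] b_le1 ab0 ab1; rewrite /mixY1.
have lo : 0 <= P * (1 - b0 - b1) by apply: mulr_ge0; lra.
have hi : 0 <= (1 - P) * (1 - b0 - b1) by apply: mulr_ge0; lra.
apply/andP; split; nra.
Qed.

Lemma mixY1_lower_bound P a0 a1 m :
  0 <= P <= 1 -> 0 <= a1 -> a0 <= m -> m < 1 -> (mixY1 P a0 a1 - m) / (1 - m) <= P.
Proof.
move=> /andP[P_ge0 P_le1] a1_ge0 a0m m_lt1.
rewrite ler_pdivrMr ?subr_gt0 // /mixY1.
have : 0 <= (1 - P) * (m - a0) by apply: mulr_ge0; lra.
have : 0 <= P * a1 by apply: mulr_ge0.
nra.
Qed.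

Lemma mixY1_upper_bound P a0 a1 pbar :
  0 <= P <= 1 -> 0 <= a0 -> 0 < pbar -> pbar <= 1 - a1 -> P <= mixY1 P a0 a1 / pbar.
Proof.
move=> /andP[P_ge0 P_le1] a0_ge0 pbar_gt0 pbar_le.
rewrite ler_pdivlMr // /mixY1.
have : 0 <= P * (1 - a1 - pbar) by apply: mulr_ge0; lra.
have : 0 <= (1 - P) * a0 by apply: mulr_ge0; lra.
nra.
Qed.

Lemma mixY1_bounds P a0 a1 plow pbar :
  0 <= P <= 1 -> 0 <= a0 <= a1 -> a0 <= plow < 1 -> 0 < pbar <= 1 - a1 ->
  (mixY1 P a0 a1 - Num.min plow (1 - pbar)) / (1 - Num.min plow (1 - pbar)) <= P
  <= mixY1 P a0 a1 / pbar.
Proof.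
move=> P01 /andP[a0_ge0 a01] /andP[a0_plow plow_lt1] /andP[pbar_gt0 pbar_le].
apply/andP; split.
  apply: mixY1_lower_bound; rewrite ?gt_min ?le_min ?plow_lt1 ?a0_plow //=; lra.
exact: mixY1_upper_bound.
Qed.

Lemma bigmin_bigmax_within (I : finType) (Q : pred I) (F : I -> R) (s lo hi : R) :
  lo <= s <= hi -> (forall i, Q i -> lo <= F i <= hi) ->
  lo <= \big[Num.min/s]_(i | Q i) F i /\ \big[Num.max/s]_(i | Q i) F i <= hi.
Proof.
move=> /andP[lo_s s_hi] F_within; split.
- by apply: le_bigmin => // i /F_within /andP[].
- by apply: bigmax_le => // i /F_within /andP[].
Qed.

End Mixture.

Section ExogenousCovariate.
Variables (R : realFieldType) (Xt : Type) (Z : finType).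
Variables (pst : Xt * Z -> R) (a : bool -> Xt * Z -> R) (piZ : Xt -> bool -> Z -> R).
Hypothesis pst01 : forall x, 0 <= pst x <= 1.
Hypothesis a01 : forall y x, 0 <= a y x <= 1.
Hypothesis a_flat : forall xt z y, a y (xt, z) = abarXt piZ a y xt.
Hypothesis abar_sum_le1 : forall xt, abarXt piZ a true xt + abarXt piZ a false xt <= 1.
Hypothesis p_range :
  forall xt z0, 0 < pbarZ (probY1 pst a) xt z0 /\ plowZ (probY1 pst a) xt z0 < 1.
Hypothesis abar_false_le_true : forall xt, abarXt piZ a false xt <= abarXt piZ a true xt.
Let p := probY1 pst a.

Lemma p_mixE xt z :
  p (xt, z) = mixY1 (pst (xt, z)) (abarXt piZ a false xt) (abarXt piZ a true xt).
Proof. by rewrite /p probY1E !a_flat. Qed.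

Lemma pstar_bounds_Z xt z :
  let m := Num.min (plowZ p xt z) (1 - pbarZ p xt z) in
  (p (xt, z) - m) / (1 - m) <= pst (xt, z) <= p (xt, z) / pbarZ p xt z.
Proof.
rewrite /=; set a0 := abarXt piZ a false xt; set a1 := abarXt piZ a true xt.
have a0_ge0 : 0 <= a0 by rewrite /a0 -(a_flat xt z); case/andP: (a01 false (xt, z)).
have p_within z' : a0 <= p (xt, z') <= 1 - a1.
  by rewrite p_mixE mixY1_between // addrC.
have [pbar_gt0 plow_lt1] : 0 < pbarZ p xt z /\ plowZ p xt z < 1 := p_range xt z.
have [plow_ge pbar_le] : a0 <= plowZ p xt z /\ pbarZ p xt z <= 1 - a1 :=
  bigmin_bigmax_within (p_within z) (fun z' _ => p_within z').
rewrite p_mixE -/a0 -/a1; apply: mixY1_bounds.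
- exact: pst01.
- by rewrite a0_ge0 abar_false_le_true.
- exact/andP.
- exact/andP.
Qed.

End ExogenousCovariate.

Section MonotoneInstrument.
Variables (R : realFieldType) (X : Type) (W : finType) (wv : W -> R).
Variables (ps : X -> W -> R) (a : bool -> X -> W -> R) (omega : X -> W -> R).
Hypothesis wv_inj : injective wv.
Hypothesis ps01 : forall x w, 0 <= ps x w <= 1.
Hypothesis a01 : forall y x w, 0 <= a y x w <= 1.
Hypothesis ps_flat : forall x w, ps x w = pstarXW omega ps x.
Hypothesis a_antitone : forall x y w1 w2, wv w2 < wv w1 -> a y x w1 <= a y x w2.
Hypothesis a_sum_le1 : forall x w, a false x w + a true x w <= 1.
Hypothesis pW_range : forall x w,
  0 < probY1 (fun xw : X * W => ps xw.1 xw.2) (fun y xw => a y xw.1 xw.2) (x, w) < 1.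
Hypothesis a_false_le_true : forall x w, a false x w <= a true x w.
Let pW (x : X) (w : W) :=
  probY1 (fun xw : X * W => ps xw.1 xw.2) (fun y xw => a y xw.1 xw.2) (x, w).

Lemma pW_mixE x w : pW x w = mixY1 (pstarXW omega ps x) (a false x w) (a true x w).
Proof. by rewrite /pW probY1E /= ps_flat. Qed.

Lemma pstarXW01 x (w : W) : 0 <= pstarXW omega ps x <= 1.
Proof. by rewrite -(ps_flat x w). Qed.

Lemma a_le_below x y w wt : wv wt <= wv w -> a y x w <= a y x wt.
Proof. by rewrite le_eqVlt => /orP[/eqP/wv_inj -> // | /a_antitone]. Qed.

Lemma pW_within x w wt : wv wt <= wv w -> a false x w <= pW x wt <= 1 - a true x w.
Proof. by move=> wt_le; rewrite pW_mixE mixY1_between ?a_le_below ?(pstarXW01 x wt). Qed.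

Lemma pstar_bounds_at x w :
  let m := Num.min (plowW wv pW x w) (1 - pbarW wv pW x w) in
  (pW x w - m) / (1 - m) <= pstarXW omega ps x <= pW x w / pbarW wv pW x w.
Proof.
rewrite /=.
have [plow_ge pbar_le] :
    a false x w <= plowW wv pW x w /\ pbarW wv pW x w <= 1 - a true x w :=
  bigmin_bigmax_within (pW_within x (lexx _)) (@pW_within x w).
have /andP[pW_gt0 pW_lt1] : 0 < pW x w < 1 := pW_range x w.
have plow_le : plowW wv pW x w <= pW x w by apply: bigmin_le_cond.
have pbar_ge : pW x w <= pbarW wv pW x w by apply: le_bigmax_cond.
rewrite pW_mixE; apply: mixY1_bounds.
- exact: pstarXW01 w.
- by case/andP: (a01 false x w) => -> _; rewrite a_false_le_true.
- by rewrite plow_ge (le_lt_trans plow_le).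
- by rewrite pbar_le (lt_le_trans pW_gt0).
Qed.

Lemma pstar_bounds_W x w0 :
  let m := fun w => Num.min (plowW wv pW x w) (1 - pbarW wv pW x w) in
  supW w0 (fun w => (pW x w - m w) / (1 - m w)) <= pstarXW omega ps x
  <= infW w0 (fun w => pW x w / pbarW wv pW x w).
Proof.
have bounds w := andP (pstar_bounds_at x w).
apply/andP; split.
- by apply: bigmax_le => [|w _]; [case: (bounds w0) | case: (bounds w)].
- by apply: le_bigmin => [|w _]; [case: (bounds w0) | case: (bounds w)].
Qed.

End MonotoneInstrument.

Theorem proposition5 (R : realFieldType) :
  (* ----- Part (1) ----- *)
  (forall (Xt : Type) (Z : finType)
     (pst : Xt * Z -> R)              (* Pr(Y*=1 | X=x) *)
     (a : bool -> Xt * Z -> R)        (* Pr(Y=1-y | Y*=y, X=x) *)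
     (piZ : Xt -> bool -> Z -> R),    (* Pr(Z=z | Y*=y, Xt=xt) *)
     (forall x, 0 <= pst x <= 1) ->
     (forall y x, 0 <= a y x <= 1) ->
     (forall xt y z, 0 <= piZ xt y z) ->
     (forall xt y, \sum_(z : Z) piZ xt y z = 1) ->
     (forall xt z y, a y (xt, z) = abarXt piZ a y xt) ->
     (forall xt, abarXt piZ a true xt + abarXt piZ a false xt <= 1) ->
     (forall xt z0, 0 < pbarZ (probY1 pst a) xt z0 /\ plowZ (probY1 pst a) xt z0 < 1) ->
     (forall xt, abarXt piZ a false xt <= abarXt piZ a true xt) ->
     forall (xt : Xt) (z : Z),
       let p := probY1 pst a in
       let m := Num.min (plowZ p xt z) (1 - pbarZ p xt z) in
       (p (xt, z) - m) / (1 - m) <= pst (xt, z) <= p (xt, z) / pbarZ p xt z)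
  /\
  (* ----- Part (2) ----- *)
  (forall (X : Type) (W : finType) (wv : W -> R)
     (ps : X -> W -> R)               (* Pr(Y*=1 | X=x, W=w) *)
     (a : bool -> X -> W -> R)        (* Pr(Y=1-y | Y*=y, X=x, W=w) *)
     (omega : X -> W -> R),           (* Pr(W=w | X=x) *)
     injective wv ->
     (forall x w, 0 <= ps x w <= 1) ->
     (forall y x w, 0 <= a y x w <= 1) ->
     (forall x w, 0 <= omega x w) ->
     (forall x, \sum_(w : W) omega x w = 1) ->
     (forall x w, ps x w = pstarXW omega ps x) ->
     (forall x y w1 w2, wv w2 < wv w1 -> a y x w1 <= a y x w2) ->
     (forall x w, a false x w + a true x w <= 1) ->
     (forall x w, 0 < probY1 (fun xw : X * W => ps xw.1 xw.2)
                             (fun y xw => a y xw.1 xw.2) (x, w) < 1) ->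
     (forall x w, a false x w <= a true x w) ->
     forall (x : X) (w0 : W),
       let pW := fun x w => probY1 (fun xw : X * W => ps xw.1 xw.2)
                                   (fun y xw => a y xw.1 xw.2) (x, w) in
       let m := fun w => Num.min (plowW wv pW x w) (1 - pbarW wv pW x w) in
       supW w0 (fun w => (pW x w - m w) / (1 - m w)) <= pstarXW omega ps x
       <= infW w0 (fun w => pW x w / pbarW wv pW x w)).
Proof.
(* The laws piZ and omega enter only through a_flat and ps_flat. *)
split=> [Xt Z pst a piZ pst01 a01 _ _ a_flat abar_sum p_range abar_mono
        |X W wv ps a omega wv_inj ps01 a01 _ _ ps_flat a_anti a_sum pW_range a_mono].
- exact: (pstar_bounds_Z pst01 a01 a_flat abar_sum p_range abar_mono).
- exact: (pstar_bounds_W wv_inj ps01 a01 ps_flat a_anti a_sum pW_range a_mono).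
Qed.
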